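(* Let $Q$ be a multiplicative equivariantly supported reflexive based quantal frame, with base locale $A$, support $\varsigma$ and $\upsilon:Q\to A$, that satisfies the unit laws, and let $G$ be its associated involutive localic graph ($\mathcal O(G_0)=A$, $\mathcal O(G_1)=Q$, $d^*(a)=a\triangleright1_Q$, $i^*(x)=x^*$, $r=d\circ i$, $u^*=\upsilon$, $G_2$ the pullback of $r$ and $d$ with $\mathcal O(G_2)=Q\otimes_AQ$, $m^*(a)=\bigvee_{xy\le a}x\otimes y$). Then $G$ is an open involutive category.
   Context: For a locale $A$, an $A$-$A$-bimodule is a sup-lattice $M$ with actions $a\triangleright m$, $m\triangleleft a$ preserving joins in each variable, with $1_A\triangleright m=m$, $(a\wedge b)\triangleright m=a\triangleright(b\triangleright m)$, $m\triangleleft1_A=m$, $m\triangleleft(a\wedge b)=(m\triangleleft a)\triangleleft b$, $(a\triangleright m)\triangleleft b=a\triangleright(m\triangleleft b)$. An $A$-$A$-quantale is such a $Q$ with associative join-preserving multiplication and $(a\triangleright x)y=a\triangleright(xy)$, $(x\triangleleft a)y=x(a\triangleright y)$, $(xy)\triangleleft a=x(y\triangleleft a)$; involutive if there is a join-preserving $x\mapsto x^*$ with $x^{**}=x$, $(xy)^*=y^*x^*$, $(a\triangleright(x\triangleleft b))^*=b\triangleright(x^*\triangleleft a)$. $1_Q$ is the top. A support is a join-preserving $\varsigma:Q\to A$ with $\varsigma(1_Q)=1_A$, $\varsigma(x)\triangleright y\le xx^*y$, $\varsigma(x)\triangleright x=x$; equivariant if $\varsigma(a\triangleright x)=a\wedge\varsigma(x)$.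 A based quantal frame is an involutive $A$-$A$-quantale which is a frame with $(a\triangleright x)\wedge y=a\triangleright(x\wedge y)$, $(x\triangleleft a)\wedge y=(x\wedge y)\triangleleft a$; reflexive: a frame homomorphism $\upsilon:Q\to A$ with $\upsilon(a\triangleright1_Q)=a=\upsilon(1_Q\triangleleft a)$. $Q\otimes_AQ$ is $Q\otimes Q$ modulo $x\otimes(a\triangleright y)=(x\triangleleft a)\otimes y$; multiplicative: the right adjoint of the induced $\mu_A:Q\otimes_AQ\to Q$ preserves joins. Unit laws: $\bigvee_{xy\le a}\upsilon(x)\triangleright y=a$ for all $a\in Q$. An open involutive category is an internal category in locales (with $u$ as units) with an involution $i$ reversing composition ($i\circ i=\mathrm{id}$, $d\circ i=r$) and with $d$ open. *)

(* Sup-lattices, frames, and the involutive localic graph associated with a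
   based quantal frame (all locale maps are represented by their inverse-image
   frame homomorphisms, so all diagrams are written contravariantly). *)

Record SupLat := { car :> Type; le : car -> car -> Prop; sup : (car -> Prop) -> car }.
Arguments le {s} _ _.
Arguments sup {s} _.

Definition img {X Y : Type} (f : X -> Y) (S : X -> Prop) : Y -> Prop :=
  fun y => exists x, S x /\ y = f x.

Definition top (L : SupLat) : L := sup (fun _ => True).
Definition meet {L : SupLat} (x y : L) : L := sup (fun z => le z x /\ le z y).

Definition is_frame (L : SupLat) : Prop :=
  (forall x : L, le x x) /\
  (forall x y z : L, le x y -> le y z -> le x z) /\
  (forall x y : L, le x y -> le y x -> x = y) /\
  (forall (S : L -> Prop) x, S x -> le x (sup S)) /\
  (forall (S : L -> Prop) y, (forall x, S x -> le x y) -> le (sup S) y) /\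
  (forall (x : L) (S : L -> Prop), meet x (sup S) = sup (img (meet x) S)).

Record Frame := { frl :> SupLat; frP : is_frame frl }.

Definition preserves_joins {L M : SupLat} (f : L -> M) : Prop :=
  forall S : L -> Prop, f (sup S) = sup (img f S).

Definition frame_hom {L M : SupLat} (f : L -> M) : Prop :=
  preserves_joins f /\ f (top L) = top M /\ forall x y : L, f (meet x y) = meet (f x) (f y).

Definition open_map {L M : SupLat} (f : M -> L) : Prop :=
  exists g : L -> M,
    (forall (x : L) (b : M), le (g x) b <-> le x (f b)) /\
    (forall (x : L) (b : M), g (meet x (f b)) = meet (g x) b).

Section BQF.
Variables (A Q : Frame) (la : A -> Q -> Q) (ra : Q -> A -> Q)
          (mul : Q -> Q -> Q) (st : Q -> Q) (vs ups : Q -> A).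

Definition is_bimodule : Prop :=
  (forall (S : A -> Prop) (m : Q), la (sup S) m = sup (img (fun a => la a m) S)) /\
  (forall (a : A) (S : Q -> Prop), la a (sup S) = sup (img (la a) S)) /\
  (forall (S : Q -> Prop) (a : A), ra (sup S) a = sup (img (fun m => ra m a) S)) /\
  (forall (m : Q) (S : A -> Prop), ra m (sup S) = sup (img (ra m) S)) /\
  (forall m, la (top A) m = m) /\
  (forall a b m, la (meet a b) m = la a (la b m)) /\
  (forall m, ra m (top A) = m) /\
  (forall a b m, ra m (meet a b) = ra (ra m a) b) /\
  (forall a b m, ra (la a m) b = la a (ra m b)).

Definition is_AA_quantale : Prop :=
  is_bimodule /\
  (forall x y z, mul (mul x y) z = mul x (mul y z)) /\
  (forall (S : Q -> Prop) y, mul (sup S) y = sup (img (fun x => mul x y) S)) /\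
  (forall x (S : Q -> Prop), mul x (sup S) = sup (img (mul x) S)) /\
  (forall a x y, mul (la a x) y = la a (mul x y)) /\
  (forall a x y, mul (ra x a) y = mul x (la a y)) /\
  (forall a x y, ra (mul x y) a = mul x (ra y a)).

Definition is_involutive : Prop :=
  preserves_joins st /\
  (forall x, st (st x) = x) /\
  (forall x y, st (mul x y) = mul (st y) (st x)) /\
  (forall a b x, st (la a (ra x b)) = la b (ra (st x) a)).

(** based quantal frame (Q is a frame by its type) *)
Definition is_based_quantal_frame : Prop :=
  is_AA_quantale /\ is_involutive /\
  (forall a x y, meet (la a x) y = la a (meet x y)) /\
  (forall a x y, meet (ra x a) y = ra (meet x y) a).

Definition is_support : Prop :=
  preserves_joins vs /\ vs (top Q) = top A /\
  (forall x y, le (la (vs x) y) (mul (mul x (st x)) y)) /\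
  (forall x, la (vs x) x = x).

Definition is_equivariant_support : Prop :=
  is_support /\ forall a x, vs (la a x) = meet a (vs x).

Definition is_reflexive : Prop :=
  frame_hom ups /\
  (forall a, ups (la a (top Q)) = a) /\
  (forall a, ups (ra (top Q) a) = a).

(** Q (x)_A Q : down-closed subsets of Q x Q closed under joins in each
    variable and saturated for x (x) (a |> y) = (x <| a) (x) y. *)
Definition tideal2 (I : Q * Q -> Prop) : Prop :=
  (forall x y x' y', I (x, y) -> le x' x -> le y' y -> I (x', y')) /\
  (forall (S : Q -> Prop) y, (forall x, S x -> I (x, y)) -> I (sup S, y)) /\
  (forall x (S : Q -> Prop), (forall y, S y -> I (x, y)) -> I (x, sup S)) /\
  (forall x a y, I (ra x a, y) <-> I (x, la a y)).

Definition iclos2 (P : Q * Q -> Prop) : Q * Q -> Prop :=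
  fun p => forall J, tideal2 J -> (forall q, P q -> J q) -> J p.

Lemma iclos2_ideal P : tideal2 (iclos2 P).
Proof.
  unfold iclos2; split; [|split; [|split]].
  - intros x y x' y' H h1 h2 J HJ HP. pose proof HJ as HJ'. destruct HJ as [D _]. exact (D _ _ _ _ (H J HJ' HP) h1 h2).
  - intros S y H J HJ HP. destruct HJ as [D [L [R B]]].
    apply L. intros x Sx. exact (H x Sx J (conj D (conj L (conj R B))) HP).
  - intros x S H J HJ HP. destruct HJ as [D [L [R B]]].
    apply R. intros y Sy. exact (H y Sy J (conj D (conj L (conj R B))) HP).
  - intros x a y; split; intros H J HJ HP; destruct HJ as [D [L [R B]]];
      apply B; exact (H J (conj D (conj L (conj R B))) HP).
Qed.

Definition T2 : SupLat :=
  {| car := {I : Q * Q -> Prop | tideal2 I};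
     le := fun I J => forall p, proj1_sig I p -> proj1_sig J p;
     sup := fun S => exist _ (iclos2 (fun p => exists I, S I /\ proj1_sig I p))
                           (iclos2_ideal _) |}.

Definition tens (x y : Q) : T2 := exist _ (iclos2 (fun p => p = (x, y))) (iclos2_ideal _).

Definition tideal3 (I : Q * Q * Q -> Prop) : Prop :=
  (forall x y z x' y' z', I (x, y, z) -> le x' x -> le y' y -> le z' z -> I (x', y', z')) /\
  (forall (S : Q -> Prop) y z, (forall x, S x -> I (x, y, z)) -> I (sup S, y, z)) /\
  (forall x (S : Q -> Prop) z, (forall y, S y -> I (x, y, z)) -> I (x, sup S, z)) /\
  (forall x y (S : Q -> Prop), (forall z, S z -> I (x, y, z)) -> I (x, y, sup S)) /\
  (forall x a y z, I (ra x a, y, z) <-> I (x, la a y, z)) /\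
  (forall x y a z, I (x, ra y a, z) <-> I (x, y, la a z)).

Definition iclos3 (P : Q * Q * Q -> Prop) : Q * Q * Q -> Prop :=
  fun p => forall J, tideal3 J -> (forall q, P q -> J q) -> J p.

Lemma iclos3_ideal P : tideal3 (iclos3 P).
Proof.
  unfold iclos3; split; [|split; [|split; [|split; [|split]]]].
  - intros x y z x' y' z' H h1 h2 h3 J HJ HP. pose proof HJ as HJ'.
    destruct HJ as [D _]. exact (D _ _ _ _ _ _ (H J HJ' HP) h1 h2 h3).
  - intros S y z H J HJ HP. pose proof HJ as HJ'. destruct HJ as [_ [L _]].
    apply L. intros x Sx. exact (H x Sx J HJ' HP).
  - intros x S z H J HJ HP. pose proof HJ as HJ'. destruct HJ as [_ [_ [M _]]].
    apply M. intros y Sy. exact (H y Sy J HJ' HP).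
  - intros x y S H J HJ HP. pose proof HJ as HJ'. destruct HJ as [_ [_ [_ [R _]]]].
    apply R. intros z Sz. exact (H z Sz J HJ' HP).
  - intros x a y z; split; intros H J HJ HP; pose proof HJ as HJ';
      destruct HJ as [_ [_ [_ [_ [B _]]]]]; apply B; exact (H J HJ' HP).
  - intros x y a z; split; intros H J HJ HP; pose proof HJ as HJ';
      destruct HJ as [_ [_ [_ [_ [_ B]]]]]; apply B; exact (H J HJ' HP).
Qed.

Definition T3 : SupLat :=
  {| car := {I : Q * Q * Q -> Prop | tideal3 I};
     le := fun I J => forall p, proj1_sig I p -> proj1_sig J p;
     sup := fun S => exist _ (iclos3 (fun p => exists I, S I /\ proj1_sig I p))
                           (iclos3_ideal _) |}.

Definition tens3 (x y z : Q) : T3 :=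
  exist _ (iclos3 (fun p => p = (x, y, z))) (iclos3_ideal _).

Definition tlift (B : SupLat) (h : Q -> Q -> B) (I : T2) : B :=
  sup (fun b => exists x y, proj1_sig I (x, y) /\ b = h x y).

Definition muA : T2 -> Q := tlift Q mul.
Definition muA_radj (a : Q) : T2 := sup (fun I : T2 => le (muA I) a).
Definition is_multiplicative : Prop := preserves_joins muA_radj.

Definition unit_laws : Prop :=
  forall a : Q, sup (fun z => exists x y, le (mul x y) a /\ z = la (ups x) y) = a.

Definition dstar (a : A) : Q := la a (top Q).
Definition istar (x : Q) : Q := st x.
Definition rstar (a : A) : Q := istar (dstar a).
Definition ustar (x : Q) : A := ups x.
Definition p1star (x : Q) : T2 := tens x (top Q).
Definition p2star (y : Q) : T2 := tens (top Q) y.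
Definition mstar (a : Q) : T2 :=
  sup (fun t : T2 => exists x y, le (mul x y) a /\ t = tens x y).

(** inverse image of a pairing <f, g> : X -> G_2 from f^*, g^* : Q -> O(X) *)
Definition pair_star (B : SupLat) (f g : Q -> B) : T2 -> B :=
  tlift B (fun x y => meet (f x) (g y)).

Definition mxid_star : T2 -> T3 :=
  tlift T3 (fun x y => sup (fun t : T3 => exists x1 x2,
                              proj1_sig (mstar x) (x1, x2) /\ t = tens3 x1 x2 y)).
Definition idxm_star : T2 -> T3 :=
  tlift T3 (fun x y => sup (fun t : T3 => exists y1 y2,
                              proj1_sig (mstar y) (y1, y2) /\ t = tens3 x y1 y2)).

Definition open_involutive_category : Prop :=
  frame_hom dstar /\ frame_hom rstar /\ frame_hom ustar /\ frame_hom istar /\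
  frame_hom p1star /\ frame_hom p2star /\ frame_hom mstar /\
  (* G_2 sits over the pullback square: r o pi1 = d o pi2 *)
  (forall a, p1star (rstar a) = p2star (dstar a)) /\
  (* d o u = id, r o u = id *)
  (forall a, ustar (dstar a) = a) /\
  (forall a, ustar (rstar a) = a) /\
  (* d o m = d o pi1, r o m = r o pi2 *)
  (forall a, mstar (dstar a) = p1star (dstar a)) /\
  (forall a, mstar (rstar a) = p2star (rstar a)) /\
  (* associativity: m o (m x id) = m o (id x m) *)
  (forall a, mxid_star (mstar a) = idxm_star (mstar a)) /\
  (* unit laws: m o <u o d, id> = id, m o <id, u o r> = id *)
  (forall a, pair_star Q (fun x => dstar (ustar x)) (fun y => y) (mstar a) = a) /\
  (forall a, pair_star Q (fun x => x) (fun y => rstar (ustar y)) (mstar a) = a) /\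
  (* involution: i o i = id, d o i = r, i o m = m o <i o pi2, i o pi1> *)
  (forall x, istar (istar x) = x) /\
  (forall a, istar (dstar a) = rstar a) /\
  (forall a, mstar (istar a) =
             pair_star T2 (fun x => p2star (istar x)) (fun y => p1star (istar y)) (mstar a)) /\
  open_map dstar.

End BQF.

From Pilot Require Import Defs.
From Stdlib Require Import FunctionalExtensionality PropExtensionality ProofIrrelevance.

(* Elements of Q (x)_A Q are represented by saturated ideals of Q x Q, so each
   structure map is computed by describing the ideal it produces.  The support
   makes these descriptions concrete: m^*(a) is {(p,q) | pq <= a}, x (x) 1 is
   {(p,q) | p <| vs q <= x} and 1 (x) y is {(p,q) | vs (st p) |> q <= y}, because
   (p,q) is saturation-equivalent to (p <| vs q, q) and to (p, vs (st p) |> q).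
   Every axiom of an open involutive category then becomes an inequality in Q:
   the laws d o m = d o pi1 and r o m = r o pi2 rest on x <| vs y <= xy1 and
   vs (z1) <= vs z; d is open because vs is left adjoint to d^* and equivariance
   is the Frobenius condition; m^* preserves joins by multiplicativity; and the
   right unit law follows from the left one through the involution, once the
   unit laws give ups (st x) = ups x. *)

Section FrameFacts.
Context {L : Frame}.
Implicit Types x y z : L.

Lemma le_refl x : le x x.
Proof. exact (proj1 (frP L) x). Qed.

Lemma le_trans x y z : le x y -> le y z -> le x z.
Proof. exact (proj1 (proj2 (frP L)) x y z). Qed.

Lemma le_antisym x y : le x y -> le y x -> x = y.
Proof. exact (proj1 (proj2 (proj2 (frP L))) x y). Qed.

Lemma le_sup (S : L -> Prop) x : S x -> le x (sup S).
Proof. exact (proj1 (proj2 (proj2 (proj2 (frP L)))) S x). Qed.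

Lemma sup_le (S : L -> Prop) y : (forall x, S x -> le x y) -> le (sup S) y.
Proof. exact (proj1 (proj2 (proj2 (proj2 (proj2 (frP L))))) S y). Qed.

Lemma sup_le_sup (S T : L -> Prop) :
  (forall x, S x -> exists y, T y /\ le x y) -> le (sup S) (sup T).
Proof.
  intro h. apply sup_le. intros x hx. destruct (h x hx) as [y [hy hxy]].
  exact (le_trans _ _ _ hxy (le_sup _ _ hy)).
Qed.

Lemma le_top x : le x (top L).
Proof. apply le_sup; exact I. Qed.

Lemma meet_le_l x y : le (meet x y) x.
Proof. apply sup_le. intros z [h _]; exact h. Qed.

Lemma meet_le_r x y : le (meet x y) y.
Proof. apply sup_le. intros z [_ h]; exact h. Qed.

Lemma le_meet x y z : le z x -> le z y -> le z (meet x y).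
Proof. intros; apply le_sup; split; assumption. Qed.

Lemma le_meet_iff x y z : le z (meet x y) <-> le z x /\ le z y.
Proof.
  split.
  - intro h. split; eapply le_trans; eauto using meet_le_l, meet_le_r.
  - intros [h1 h2]. apply le_meet; assumption.
Qed.

Lemma meetC x y : meet x y = meet y x.
Proof. apply le_antisym; apply le_meet; (apply meet_le_l || apply meet_le_r). Qed.

Lemma meet_topl y : meet (top L) y = y.
Proof. apply le_antisym; [apply meet_le_r | apply le_meet; [apply le_top | apply le_refl]]. Qed.

End FrameFacts.

Lemma sup_ext {L : SupLat} (S T : L -> Prop) : (forall z, S z <-> T z) -> sup S = sup T.
Proof.
  intro h. f_equal. extensionality z. apply propositional_extensionality, h.
Qed.

Lemma preserves_joins_mono {L M : Frame} (f : L -> M) :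
  preserves_joins f -> forall x y, le x y -> le (f x) (f y).
Proof.
  intros hf x y h.
  assert (E : sup (fun z => z = x \/ z = y) = y).
  { apply le_antisym.
    - apply sup_le. intros z [-> | ->]; [exact h | apply le_refl].
    - apply le_sup; right; reflexivity. }
  rewrite <- E, hf. apply le_sup. exists x; auto.
Qed.

Lemma img_comp {X Y Z : Type} (f : Y -> Z) (g : X -> Y) (S : X -> Prop) :
  img f (img g S) = img (fun x => f (g x)) S.
Proof.
  extensionality z. apply propositional_extensionality. split.
  - intros [y [[x [hx ->]] ->]]. exists x; auto.
  - intros [x [hx ->]]. exists (g x). split; [exists x; auto | reflexivity].
Qed.

Lemma pred_sig_ext {X : Type} (P : (X -> Prop) -> Prop) (I J : {I : X -> Prop | P I}) :
  (forall p, proj1_sig I p <-> proj1_sig J p) -> I = J.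
Proof.
  destruct I as [I HI], J as [J HJ]; simpl; intro h. apply subset_eq_compat.
  extensionality p. apply propositional_extensionality, h.
Qed.

Local Notation "p ∈ I" := (proj1_sig I p) (at level 70).

Section TensorIdeals.
Context {A Q : Frame} {la : A -> Q -> Q} {ra : Q -> A -> Q}.

Local Notation T2 := (T2 A Q la ra).
Local Notation T3 := (T3 A Q la ra).
Local Notation tideal2 := (tideal2 A Q la ra).
Local Notation tens := (tens A Q la ra).

Lemma tideal2_down (I : Q * Q -> Prop) x y x' y' :
  tideal2 I -> I (x, y) -> le x' x -> le y' y -> I (x', y').
Proof. intros [h _]; apply h. Qed.

Lemma tideal2_sup_l (I : Q * Q -> Prop) S y :
  tideal2 I -> (forall x, S x -> I (x, y)) -> I (sup S, y).
Proof. intros [_ [h _]]; apply h. Qed.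

Lemma tideal2_sup_r (I : Q * Q -> Prop) x S :
  tideal2 I -> (forall y, S y -> I (x, y)) -> I (x, sup S).
Proof. intros [_ [_ [h _]]]; apply h. Qed.

Lemma tideal2_sat (I : Q * Q -> Prop) x a y :
  tideal2 I -> I (ra x a, y) <-> I (x, la a y).
Proof. intros [_ [_ [_ h]]]; apply h. Qed.

Lemma sup2_mem (S : T2 -> Prop) (I : T2) p : S I -> p ∈ I -> p ∈ sup S.
Proof. intros hS hI J _ hJ. apply hJ. exists I; auto. Qed.

Lemma sup2_ind (S : T2 -> Prop) (M : Q * Q -> Prop) p :
  tideal2 M -> (forall I, S I -> forall q, q ∈ I -> M q) -> p ∈ sup S -> M p.
Proof. intros hM h hp. apply (hp M hM). intros q [I [hI hq]]. exact (h I hI q hq). Qed.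

Lemma tens_mem x y : (x, y) ∈ tens x y.
Proof. intros J _ hJ. apply hJ. reflexivity. Qed.

Lemma tens_ind x y (M : Q * Q -> Prop) p : tideal2 M -> M (x, y) -> p ∈ tens x y -> M p.
Proof. intros hM hxy hp. apply (hp M hM). intros q ->. exact hxy. Qed.

Lemma tens_sat x a y : tens (ra x a) y = tens x (la a y).
Proof.
  apply pred_sig_ext; intro p; split; apply tens_ind; try apply proj2_sig.
  - apply (tideal2_sat _ _ _ _ (proj2_sig _)), tens_mem.
  - apply (tideal2_sat _ _ _ _ (proj2_sig _)), tens_mem.
Qed.

Lemma meet2_mem (I J : T2) p : p ∈ meet I J <-> p ∈ I /\ p ∈ J.
Proof.
  assert (hIJ : tideal2 (fun q => q ∈ I /\ q ∈ J)).
  { destruct (proj2_sig I) as [a1 [a2 [a3 a4]]], (proj2_sig J) as [b1 [b2 [b3 b4]]].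
    split; [|split; [|split]].
    - intros x y x' y' [h1 h2] ? ?; split; eauto.
    - intros S y h; split; [apply a2 | apply b2]; intros; apply h; auto.
    - intros x S h; split; [apply a3 | apply b3]; intros; apply h; auto.
    - intros x a y; rewrite a4, b4; tauto. }
  split.
  - apply (sup2_ind _ _ p hIJ). intros K [hKI hKJ] q hq. split; auto.
  - intro h. apply (sup2_mem _ (exist _ _ hIJ)); [split; intros q [? ?]; auto | exact h].
Qed.

Lemma top2_mem p : p ∈ top T2.
Proof.
  assert (hT : tideal2 (fun _ => True)) by (split; [|split; [|split]]; simpl; intros; tauto).
  apply (sup2_mem _ (exist _ _ hT)); simpl; auto.
Qed.

Lemma sup3_ub (S : T3 -> Prop) (I : T3) : S I -> le I (sup S).
Proof. intros hS p hp J _ hJ. apply hJ. exists I; auto. Qed.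

Lemma sup3_lub (S : T3 -> Prop) (R : T3) : (forall I, S I -> le I R) -> le (sup S) R.
Proof.
  intros h p hp. apply (hp (proj1_sig R) (proj2_sig R)).
  intros q [I [hI hq]]. exact (h I hI q hq).
Qed.

Lemma le3_trans (I J K : T3) : le I J -> le J K -> le I K.
Proof. intros h1 h2 p hp. apply h2, h1, hp. Qed.

Lemma le3_antisym (I J : T3) : le I J -> le J I -> I = J.
Proof. intros; apply pred_sig_ext; split; auto. Qed.

End TensorIdeals.

Section BasedQuantalFrame.
Variables (A Q : Frame) (la : A -> Q -> Q) (ra : Q -> A -> Q)
          (mul : Q -> Q -> Q) (st : Q -> Q) (vs ups : Q -> A).
Hypothesis HB : is_based_quantal_frame A Q la ra mul st.
Hypothesis HS : is_equivariant_support A Q la mul st vs.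
Hypothesis HR : is_reflexive A Q la ra ups.
Hypothesis HM : is_multiplicative A Q la ra mul.
Hypothesis HU : unit_laws A Q la mul ups.

Local Notation "1" := (top Q).
Local Notation T2 := (T2 A Q la ra).
Local Notation tideal2 := (tideal2 A Q la ra).
Local Notation tens := (tens A Q la ra).
Local Notation mstar := (mstar A Q la ra mul).
Local Notation dstar := (dstar A Q la).
Local Notation rstar := (rstar A Q la st).
Local Notation p1star := (p1star A Q la ra).
Local Notation p2star := (p2star A Q la ra).

Ltac unpack_bqf :=
  destruct HB as
    [[[la_sup_l_ax [la_sup_r_ax [ra_sup_l_ax [ra_sup_r_ax
       [la_top_ax [la_meet_ax [ra_top_ax [ra_meet_ax _]]]]]]]]
      [mulA_ax [mul_sup_l_ax [mul_sup_r_ax [mul_la_ax [mul_ra_ax ra_mul_ax]]]]]]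
     [[st_sup_ax [stK_ax [st_mul_ax st_la_ra_ax]]] [meet_la_ax meet_ra_ax]]].

Lemma la_sup_l m : preserves_joins (fun a => la a m).
Proof. unpack_bqf. intro; apply la_sup_l_ax. Qed.
Lemma la_sup_r a : preserves_joins (la a). Proof. unpack_bqf. intro; apply la_sup_r_ax. Qed.
Lemma ra_sup_l a : preserves_joins (fun m => ra m a).
Proof. unpack_bqf. intro; apply ra_sup_l_ax. Qed.
Lemma ra_sup_r m : preserves_joins (ra m). Proof. unpack_bqf. intro; apply ra_sup_r_ax. Qed.
Lemma la_top m : la (top A) m = m. Proof. unpack_bqf. apply la_top_ax. Qed.
Lemma la_meet a b m : la (meet a b) m = la a (la b m). Proof. unpack_bqf. apply la_meet_ax. Qed.
Lemma ra_top m : ra m (top A) = m. Proof. unpack_bqf. apply ra_top_ax. Qed.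
Lemma ra_meet a b m : ra m (meet a b) = ra (ra m a) b. Proof. unpack_bqf. apply ra_meet_ax. Qed.
Lemma mulA x y z : mul (mul x y) z = mul x (mul y z). Proof. unpack_bqf. apply mulA_ax. Qed.
Lemma mul_sup_l y : preserves_joins (fun x => mul x y).
Proof. unpack_bqf. intro; apply mul_sup_l_ax. Qed.
Lemma mul_sup_r x : preserves_joins (mul x). Proof. unpack_bqf. intro; apply mul_sup_r_ax. Qed.
Lemma mul_la a x y : mul (la a x) y = la a (mul x y). Proof. unpack_bqf. apply mul_la_ax. Qed.
Lemma mul_ra a x y : mul (ra x a) y = mul x (la a y). Proof. unpack_bqf. apply mul_ra_ax. Qed.
Lemma ra_mul a x y : ra (mul x y) a = mul x (ra y a). Proof. unpack_bqf. apply ra_mul_ax. Qed.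
Lemma st_sup : preserves_joins st. Proof. unpack_bqf. exact st_sup_ax. Qed.
Lemma stK x : st (st x) = x. Proof. unpack_bqf. apply stK_ax. Qed.
Lemma st_mul x y : st (mul x y) = mul (st y) (st x). Proof. unpack_bqf. apply st_mul_ax. Qed.
Lemma st_la_ra a b x : st (la a (ra x b)) = la b (ra (st x) a).
Proof. unpack_bqf. apply st_la_ra_ax. Qed.
Lemma meet_la a x y : meet (la a x) y = la a (meet x y). Proof. unpack_bqf. apply meet_la_ax. Qed.
Lemma meet_ra a x y : meet (ra x a) y = ra (meet x y) a. Proof. unpack_bqf. apply meet_ra_ax. Qed.

Lemma vs_sup : preserves_joins vs. Proof. destruct HS as [[h _] _]; exact h. Qed.
Lemma vs_top : vs 1 = top A. Proof. destruct HS as [[_ [h _]] _]; exact h. Qed.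
Lemma vs_la_le x y : le (la (vs x) y) (mul (mul x (st x)) y).
Proof. destruct HS as [[_ [_ [h _]]] _]; apply h. Qed.
Lemma vs_la_id x : la (vs x) x = x. Proof. destruct HS as [[_ [_ [_ h]]] _]; apply h. Qed.
Lemma vs_la a x : vs (la a x) = meet a (vs x). Proof. destruct HS as [_ h]; apply h. Qed.

Lemma ups_frame_hom : frame_hom ups. Proof. destruct HR as [h _]; exact h. Qed.
Lemma ups_sup : preserves_joins ups. Proof. exact (proj1 ups_frame_hom). Qed.
Lemma ups_meet x y : ups (meet x y) = meet (ups x) (ups y).
Proof. exact (proj2 (proj2 ups_frame_hom) x y). Qed.
Lemma ups_la_top a : ups (la a 1) = a. Proof. destruct HR as [_ [h _]]; apply h. Qed.
Lemma ups_ra_top a : ups (ra 1 a) = a. Proof. destruct HR as [_ [_ h]]; apply h. Qed.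

Lemma la_mono_l a b m : le a b -> le (la a m) (la b m).
Proof. apply (preserves_joins_mono _ (la_sup_l m)). Qed.
Lemma la_mono_r a m n : le m n -> le (la a m) (la a n).
Proof. apply (preserves_joins_mono _ (la_sup_r a)). Qed.
Lemma ra_mono_l a m n : le m n -> le (ra m a) (ra n a).
Proof. apply (preserves_joins_mono _ (ra_sup_l a)). Qed.
Lemma ra_mono_r m a b : le a b -> le (ra m a) (ra m b).
Proof. apply (preserves_joins_mono _ (ra_sup_r m)). Qed.
Lemma mul_mono x x' y y' : le x x' -> le y y' -> le (mul x y) (mul x' y').
Proof.
  intros hx hy. eapply le_trans.
  - apply (preserves_joins_mono _ (mul_sup_l y)), hx.
  - apply (preserves_joins_mono _ (mul_sup_r x')), hy.
Qed.
Lemma st_mono x y : le x y -> le (st x) (st y).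
Proof. apply (preserves_joins_mono _ st_sup). Qed.
Lemma vs_mono x y : le x y -> le (vs x) (vs y).
Proof. apply (preserves_joins_mono _ vs_sup). Qed.

Lemma st_le_st x y : le (st x) (st y) <-> le x y.
Proof. split; [rewrite <- (stK x), <- (stK y) at 2|]; apply st_mono. Qed.
Lemma st_le x y : le (st x) y <-> le x (st y).
Proof. rewrite <- st_le_st, stK. tauto. Qed.

Lemma st_top : st 1 = 1.
Proof. apply le_antisym; [apply le_top | apply st_le, le_top]. Qed.

Lemma st_meet x y : st (meet x y) = meet (st x) (st y).
Proof.
  apply le_antisym.
  - apply le_meet; apply st_mono; [apply meet_le_l | apply meet_le_r].
  - apply st_le, le_meet; apply st_le; [apply meet_le_l | apply meet_le_r].
Qed.

Lemma la_le a x : le (la a x) x.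
Proof. rewrite <- (la_top x) at 2. apply la_mono_l, le_top. Qed.
Lemma ra_le a x : le (ra x a) x.
Proof. rewrite <- (ra_top x) at 2. apply ra_mono_r, le_top. Qed.

Lemma la_meet_top a x : la a x = meet (la a 1) x.
Proof. rewrite meet_la, meet_topl. reflexivity. Qed.
Lemma ra_meet_top a x : ra x a = meet (ra 1 a) x.
Proof. rewrite meet_ra, meet_topl. reflexivity. Qed.

Lemma st_la a x : st (la a x) = ra (st x) a.
Proof. rewrite <- (ra_top x) at 1. rewrite st_la_ra, la_top. reflexivity. Qed.
Lemma st_ra a x : st (ra x a) = la a (st x).
Proof. rewrite <- (la_top (ra x a)), st_la_ra, ra_top. reflexivity. Qed.
Lemma st_la_top a : st (la a 1) = ra 1 a.
Proof. rewrite st_la, st_top. reflexivity. Qed.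

Lemma ups_ra a x : ups (ra x a) = meet (ups x) a.
Proof. rewrite ra_meet_top, ups_meet, ups_ra_top, meetC. reflexivity. Qed.

Lemma vs_le_iff x b : le (vs x) b <-> le x (la b 1).
Proof.
  split; intro h.
  - rewrite <- (vs_la_id x). eapply le_trans; [apply la_mono_l, h | apply la_mono_r, le_top].
  - assert (E : la b x = x).
    { apply le_antisym; [apply la_le|].
      rewrite la_meet_top. apply le_meet; [exact h | apply le_refl]. }
    rewrite <- E, vs_la. apply meet_le_l.
Qed.

Lemma le_mul_top z : le z (mul z 1).
Proof.
  assert (h : le (st z) (mul 1 (st z))).
  { pose proof (vs_la_le (st z) (st z)) as h. rewrite vs_la_id in h.
    eapply le_trans; [exact h | apply mul_mono; [apply le_top | apply le_refl]]. }
  apply st_le_st. rewrite st_mul, st_top. exact h.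
Qed.

Lemma vs_mul_top_le w : le (vs (mul w 1)) (vs w).
Proof. rewrite <- (vs_la_id w) at 1. rewrite mul_la, vs_la. apply meet_le_l. Qed.

Lemma ra_vs_le_mul x y : le (ra x (vs y)) (mul (mul x y) 1).
Proof.
  eapply le_trans; [apply le_mul_top|]. rewrite mul_ra.
  eapply le_trans; [apply mul_mono; [apply le_refl | apply vs_la_le]|].
  rewrite !mulA. apply mul_mono; [apply le_refl|]. apply mul_mono; [apply le_refl | apply le_top].
Qed.

Lemma ra_vs_le_dstar x y a : le (mul x y) (la a 1) -> le (ra x (vs y)) (la a 1).
Proof.
  intro h. apply vs_le_iff.
  eapply le_trans; [apply vs_mono, ra_vs_le_mul|].
  eapply le_trans; [apply vs_mul_top_le | apply vs_le_iff, h].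
Qed.

Lemma ra_vs_st x : ra x (vs (st x)) = x.
Proof. rewrite <- (stK x) at 1. rewrite <- st_la, vs_la_id, stK. reflexivity. Qed.

Definition ups_pairs (a : Q) : A :=
  sup (fun z => exists x y, le (mul x y) a /\ z = meet (ups x) (ups (st y))).

Lemma ups_st_unit a : ups (st a) = ups_pairs a.
Proof.
  rewrite <- (HU a) at 1. rewrite st_sup, ups_sup, !img_comp.
  apply le_antisym; apply sup_le_sup.
  - intros z [w [[x [y [hxy ->]]] ->]]. exists (meet (ups x) (ups (st y))).
    split; [exists x, y; auto|]. rewrite st_la, ups_ra, meetC. apply le_refl.
  - intros z [x [y [hxy ->]]]. exists (ups (st (la (ups x) y))).
    split; [exists (la (ups x) y); split; [exists x, y|]; auto|].
    rewrite st_la, ups_ra, meetC. apply le_refl.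
Qed.

Lemma ups_pairs_le_st a : le (ups_pairs a) (ups_pairs (st a)).
Proof.
  apply sup_le_sup. intros z [x [y [hxy ->]]].
  exists (meet (ups (st y)) (ups (st (st x)))). split.
  - exists (st y), (st x). split; [|reflexivity]. rewrite <- st_mul. apply st_mono, hxy.
  - rewrite stK, meetC. apply le_refl.
Qed.

Lemma ups_st x : ups (st x) = ups x.
Proof.
  rewrite <- (stK x) at 2. rewrite !ups_st_unit. apply le_antisym.
  - apply ups_pairs_le_st.
  - rewrite <- (stK x) at 2. apply ups_pairs_le_st.
Qed.

Lemma unit_law_r a : sup (fun z => exists x y, le (mul x y) a /\ z = ra x (ups y)) = a.
Proof.
  transitivity (st (sup (fun z => exists x y, le (mul x y) (st a) /\ z = la (ups x) y)));
    [| rewrite HU; apply stK].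
  rewrite st_sup.
  apply le_antisym; apply sup_le_sup.
  - intros z [x [y [hxy ->]]]. exists (st (la (ups (st y)) (st x))). split.
    + exists (la (ups (st y)) (st x)). split; [|reflexivity].
      exists (st y), (st x). split; [|reflexivity]. rewrite <- st_mul. apply st_mono, hxy.
    + rewrite st_la, stK, ups_st. apply le_refl.
  - intros z [w [[x [y [hxy ->]]] ->]]. exists (ra (st y) (ups (st x))). split.
    + exists (st y), (st x). split; [|reflexivity]. rewrite <- st_mul. apply st_le, hxy.
    + rewrite st_la, ups_st. apply le_refl.
Qed.

Definition mstar_set (a : Q) : Q * Q -> Prop := fun p => le (mul (fst p) (snd p)) a.
Definition p1_set (x : Q) : Q * Q -> Prop := fun p => le (ra (fst p) (vs (snd p))) x.
Definition p2_set (y : Q) : Q * Q -> Prop := fun p => le (la (vs (st (fst p))) (snd p)) y.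

Lemma mstar_set_ideal a : tideal2 (mstar_set a).
Proof.
  unfold mstar_set; split; [|split; [|split]]; simpl.
  - intros x y x' y' h hx hy. eapply le_trans; [apply mul_mono; eauto | exact h].
  - intros S y h. rewrite (mul_sup_l y). apply sup_le. intros z [x [hx ->]]. auto.
  - intros x S h. rewrite (mul_sup_r x). apply sup_le. intros z [y [hy ->]]. auto.
  - intros x b y. rewrite mul_ra. tauto.
Qed.

Lemma p1_set_ideal x : tideal2 (p1_set x).
Proof.
  unfold p1_set; split; [|split; [|split]]; simpl.
  - intros p q p' q' h hp hq. eapply le_trans; [|exact h].
    eapply le_trans; [apply ra_mono_l, hp | apply ra_mono_r, vs_mono, hq].
  - intros S q h. rewrite (ra_sup_l (vs q)). apply sup_le. intros z [p [hp ->]]. auto.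
  - intros p S h. rewrite vs_sup, (ra_sup_r p), img_comp. apply sup_le.
    intros z [q [hq ->]]. auto.
  - intros p b q. rewrite <- ra_meet, vs_la. tauto.
Qed.

Lemma p2_set_ideal y : tideal2 (p2_set y).
Proof.
  unfold p2_set; split; [|split; [|split]]; simpl.
  - intros p q p' q' h hp hq. eapply le_trans; [|exact h].
    eapply le_trans; [apply la_mono_l, vs_mono, st_mono, hp | apply la_mono_r, hq].
  - intros S q h. rewrite st_sup, vs_sup, (la_sup_l q), !img_comp. apply sup_le.
    intros z [p [hp ->]]. auto.
  - intros p S h. rewrite (la_sup_r _). apply sup_le. intros z [q [hq ->]]. auto.
  - intros p b q. rewrite st_ra, vs_la, <- !la_meet, meetC. tauto.
Qed.

Lemma tideal2_of_bounds (I : Q * Q -> Prop) x y p q : tideal2 I -> I (x, y) ->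
  le (ra p (vs q)) x -> le (la (vs (st p)) q) y -> I (p, q).
Proof.
  intros hI hxy hx hy. rewrite <- (ra_vs_st p). apply (tideal2_sat _ _ _ _ hI).
  set (q' := la (vs (st p)) q). rewrite <- (vs_la_id q'). apply (tideal2_sat _ _ _ _ hI).
  eapply tideal2_down; eauto. eapply le_trans; [|exact hx]. apply ra_mono_r, vs_mono, la_le.
Qed.

Lemma tideal2_of_p1 (I : Q * Q -> Prop) x p q :
  tideal2 I -> I (x, 1) -> le (ra p (vs q)) x -> I (p, q).
Proof. intros hI hx h. apply (tideal2_of_bounds I x 1); auto using le_top. Qed.

Lemma tideal2_of_p2 (I : Q * Q -> Prop) y p q :
  tideal2 I -> I (1, y) -> le (la (vs (st p)) q) y -> I (p, q).
Proof. intros hI hy h. apply (tideal2_of_bounds I 1 y); auto using le_top. Qed.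

Lemma mstar_mem a x y : (x, y) ∈ mstar a <-> le (mul x y) a.
Proof.
  split.
  - apply (sup2_ind _ (mstar_set a) (x, y) (mstar_set_ideal a)).
    intros I [x0 [y0 [hxy ->]]] q. apply tens_ind; [apply mstar_set_ideal | exact hxy].
  - intro h. eapply sup2_mem; [exists x, y; split; [exact h | reflexivity] | apply tens_mem].
Qed.

Lemma p1_mem x p q : (p, q) ∈ tens x 1 <-> le (ra p (vs q)) x.
Proof.
  split.
  - apply (tens_ind _ _ (p1_set x) (p, q) (p1_set_ideal x)).
    unfold p1_set; simpl. rewrite vs_top, ra_top. apply le_refl.
  - apply tideal2_of_p1; [apply proj2_sig | apply tens_mem].
Qed.

Lemma p2_mem y p q : (p, q) ∈ tens 1 y <-> le (la (vs (st p)) q) y.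
Proof.
  split.
  - apply (tens_ind _ _ (p2_set y) (p, q) (p2_set_ideal y)).
    unfold p2_set; simpl. rewrite st_top, vs_top, la_top. apply le_refl.
  - apply tideal2_of_p2; [apply proj2_sig | apply tens_mem].
Qed.

Lemma muA_radj_mstar a : muA_radj A Q la ra mul a = mstar a.
Proof.
  apply pred_sig_ext; intros [x y]. rewrite mstar_mem. split.
  - apply (sup2_ind _ (mstar_set a) (x, y) (mstar_set_ideal a)).
    intros I hI [x0 y0] hq. eapply le_trans; [|exact hI]. apply le_sup. exists x0, y0; auto.
  - intro h. apply (sup2_mem _ (mstar a)); [|apply mstar_mem, h].
    apply sup_le. intros z [x0 [y0 [hq ->]]]. apply mstar_mem, hq.
Qed.

Lemma dstar_frame_hom : frame_hom dstar.
Proof.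
  split; [|split].
  - intro S. exact (la_sup_l 1 S).
  - apply la_top.
  - intros a b. unfold Defs.dstar. rewrite la_meet, meet_la, meet_topl. reflexivity.
Qed.

Lemma istar_frame_hom : frame_hom (istar Q st).
Proof. split; [exact st_sup | split; [exact st_top | exact st_meet]]. Qed.

Lemma rstar_frame_hom : frame_hom rstar.
Proof.
  destruct dstar_frame_hom as [hd1 [hd2 hd3]].
  split; [|split]; unfold Defs.rstar, istar.
  - intro S. rewrite hd1, st_sup, img_comp. reflexivity.
  - rewrite hd2. apply st_top.
  - intros a b. rewrite hd3. apply st_meet.
Qed.

Lemma p1star_frame_hom : frame_hom p1star.
Proof.
  split; [|split]; unfold Defs.p1star.
  - intro S. apply pred_sig_ext; intros [p q]. rewrite p1_mem. split.
    + apply tideal2_of_p1; [apply proj2_sig|].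
      eapply tideal2_sup_l; [apply proj2_sig|]. intros x hx.
      apply (sup2_mem _ (tens x 1)); [exists x; auto | apply tens_mem].
    + apply (sup2_ind _ (p1_set (sup S)) (p, q) (p1_set_ideal _)).
      intros I [x [hx ->]] [p' q'] hq. apply p1_mem in hq.
      eapply le_trans; [exact hq | apply le_sup, hx].
  - apply pred_sig_ext; intros [p q]. rewrite p1_mem.
    split; intros _; [apply top2_mem | apply le_top].
  - intros x y. apply pred_sig_ext; intros [p q].
    rewrite meet2_mem, !p1_mem, le_meet_iff. tauto.
Qed.

Lemma p2star_frame_hom : frame_hom p2star.
Proof.
  split; [|split]; unfold Defs.p2star.
  - intro S. apply pred_sig_ext; intros [p q]. rewrite p2_mem. split.
    + apply tideal2_of_p2; [apply proj2_sig|].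
      eapply tideal2_sup_r; [apply proj2_sig|]. intros y hy.
      apply (sup2_mem _ (tens 1 y)); [exists y; auto | apply tens_mem].
    + apply (sup2_ind _ (p2_set (sup S)) (p, q) (p2_set_ideal _)).
      intros I [y [hy ->]] [p' q'] hq. apply p2_mem in hq.
      eapply le_trans; [exact hq | apply le_sup, hy].
  - apply pred_sig_ext; intros [p q]. rewrite p2_mem.
    split; intros _; [apply top2_mem | apply le_top].
  - intros x y. apply pred_sig_ext; intros [p q].
    rewrite meet2_mem, !p2_mem, le_meet_iff. tauto.
Qed.

Lemma mstar_frame_hom : frame_hom mstar.
Proof.
  split; [|split].
  - intro S. assert (E : muA_radj A Q la ra mul = mstar).
    { extensionality a. apply muA_radj_mstar. }
    unfold is_multiplicative in HM. rewrite E in HM. apply HM.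
  - apply pred_sig_ext; intros [p q]. rewrite mstar_mem.
    split; intros _; [apply top2_mem | apply le_top].
  - intros a b. apply pred_sig_ext; intros [p q].
    rewrite meet2_mem, !mstar_mem, le_meet_iff. tauto.
Qed.

Lemma p1star_rstar a : p1star (rstar a) = p2star (dstar a).
Proof.
  unfold Defs.p1star, Defs.p2star, Defs.rstar, istar, Defs.dstar.
  rewrite st_la_top. apply tens_sat.
Qed.

Lemma ups_rstar a : ups (rstar a) = a.
Proof. unfold Defs.rstar, istar, Defs.dstar. rewrite st_la_top. apply ups_ra_top. Qed.

Lemma mstar_dstar a : mstar (dstar a) = p1star (dstar a).
Proof.
  apply pred_sig_ext; intros [p q]. unfold Defs.p1star, Defs.dstar.
  rewrite mstar_mem, p1_mem. split.
  - apply ra_vs_le_dstar.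
  - intro h. apply mstar_mem. apply (tideal2_of_p1 _ (la a 1)); [apply proj2_sig | | exact h].
    apply mstar_mem. rewrite mul_la. apply la_mono_r, le_top.
Qed.

Lemma mstar_rstar a : mstar (rstar a) = p2star (rstar a).
Proof.
  apply pred_sig_ext; intros [p q]. unfold Defs.p2star, Defs.rstar, istar, Defs.dstar.
  rewrite st_la_top, mstar_mem, p2_mem. split.
  - intro h. apply st_le_st. rewrite st_la, st_ra, st_top.
    apply ra_vs_le_dstar. rewrite <- st_mul. apply st_le. rewrite st_la_top. exact h.
  - intro h. apply mstar_mem. apply (tideal2_of_p2 _ (ra 1 a)); [apply proj2_sig | | exact h].
    apply mstar_mem. rewrite <- ra_mul. apply ra_mono_l, le_top.
Qed.

Lemma mstar_assoc a :
  mxid_star A Q la ra mul (mstar a) = idxm_star A Q la ra mul (mstar a).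
Proof.
  apply le3_antisym; apply sup3_lub; intros I [x [y [hxy ->]]]; apply sup3_lub;
    apply mstar_mem in hxy.
  - intros t [x1 [x2 [h12 ->]]]. apply mstar_mem in h12.
    eapply le3_trans; [| apply sup3_ub; exists x1, (mul x2 y); split; [|reflexivity]].
    + apply sup3_ub. exists x2, y. split; [apply mstar_mem, le_refl | reflexivity].
    + apply mstar_mem. rewrite <- mulA. eapply le_trans; [|exact hxy].
      apply mul_mono; [exact h12 | apply le_refl].
  - intros t [y1 [y2 [h12 ->]]]. apply mstar_mem in h12.
    eapply le3_trans; [| apply sup3_ub; exists (mul x y1), y2; split; [|reflexivity]].
    + apply sup3_ub. exists x, y1. split; [apply mstar_mem, le_refl | reflexivity].
    + apply mstar_mem. rewrite mulA. eapply le_trans; [|exact hxy].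
      apply mul_mono; [apply le_refl | exact h12].
Qed.

Lemma mstar_unit_l a :
  pair_star A Q la ra Q (fun x => dstar (ustar A Q ups x)) (fun y => y) (mstar a) = a.
Proof.
  rewrite <- (HU a) at 2. apply sup_ext. intro z.
  split; intros [x [y [h ->]]]; exists x, y; rewrite mstar_mem in *;
    unfold Defs.dstar, ustar; rewrite <- la_meet_top; auto.
Qed.

Lemma mstar_unit_r a :
  pair_star A Q la ra Q (fun x => x) (fun y => rstar (ustar A Q ups y)) (mstar a) = a.
Proof.
  rewrite <- (unit_law_r a) at 2. apply sup_ext. intro z.
  split; intros [x [y [h ->]]]; exists x, y; rewrite mstar_mem in *;
    unfold Defs.rstar, istar, Defs.dstar, ustar; rewrite st_la_top, meetC, <- ra_meet_top; auto.
Qed.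

Lemma mstar_istar a :
  mstar (istar Q st a) =
  pair_star A Q la ra T2 (fun x => p2star (istar Q st x)) (fun y => p1star (istar Q st y))
    (mstar a).
Proof.
  apply pred_sig_ext; intros [p q]. unfold istar, pair_star, tlift, Defs.p1star, Defs.p2star.
  rewrite mstar_mem. split.
  - intro h. apply (sup2_mem _ (meet (tens 1 (st (st q))) (tens (st (st p)) 1))).
    + exists (st q), (st p). split; [|reflexivity].
      apply mstar_mem. rewrite <- st_mul. apply st_le, h.
    + apply meet2_mem. rewrite !stK, p2_mem, p1_mem. split; [apply la_le | apply ra_le].
  - apply (sup2_ind _ (mstar_set (st a)) (p, q) (mstar_set_ideal _)).
    intros I [x [y [hxy ->]]] [p' q'] hq.
    apply meet2_mem in hq. destruct hq as [h2 h1]. apply p2_mem in h2. apply p1_mem in h1.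
    apply (tideal2_of_bounds _ (st y) (st x)); auto using mstar_set_ideal.
    unfold mstar_set; simpl. rewrite <- st_mul. apply st_mono, mstar_mem, hxy.
Qed.

Lemma dstar_open : open_map dstar.
Proof.
  exists vs. split.
  - apply vs_le_iff.
  - intros x b. unfold Defs.dstar. rewrite meetC, <- la_meet_top, vs_la. apply meetC.
Qed.

End BasedQuantalFrame.

Theorem lemma5p2 (A Q : Frame) (la : A -> Q -> Q) (ra : Q -> A -> Q)
  (mul : Q -> Q -> Q) (st : Q -> Q) (vs ups : Q -> A) :
  is_based_quantal_frame A Q la ra mul st ->
  is_equivariant_support A Q la mul st vs ->
  is_reflexive A Q la ra ups ->
  is_multiplicative A Q la ra mul ->
  unit_laws A Q la mul ups ->
  open_involutive_category A Q la ra mul st ups.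
Proof.
  intros HB HS HR HM HU. unfold open_involutive_category.
  repeat match goal with |- _ /\ _ => split end.
  - eapply dstar_frame_hom; eassumption.
  - eapply rstar_frame_hom; eassumption.
  - eapply ups_frame_hom; eassumption.
  - eapply istar_frame_hom; eassumption.
  - eapply p1star_frame_hom; eassumption.
  - eapply p2star_frame_hom; eassumption.
  - eapply mstar_frame_hom; eassumption.
  - eapply p1star_rstar; eassumption.
  - eapply ups_la_top; eassumption.
  - eapply ups_rstar; eassumption.
  - eapply mstar_dstar; eassumption.
  - eapply mstar_rstar; eassumption.
  - eapply mstar_assoc; eassumption.
  - eapply mstar_unit_l; eassumption.
  - eapply mstar_unit_r; eassumption.
  - eapply stK; eassumption.
  - reflexivity.
  - eapply mstar_istar; eassumption.
  - eapply dstar_open; eassumption.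
Qed.
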